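(* Let $M\ge3$, $\phi\in\mathrm{Hyp}^M$, $K\ge1$, $\mu\ge1$, and let $\tau_1,\tau_2$ be caps of side length $\mu^{1/2}K^{-1}$ with centers $z_1^c,z_2^c\in\Sigma$. Suppose that $$|t^1_{z_2^c}(z_1^c,z_2^c)|\ge 50\mu^{1/2}K^{-1}\quad\text{and}\quad |t^2_{z_2^c}(z_1^c,z_2^c)|\ge50\mu^{1/2}K^{-1}.$$ Then $$|\Gamma_z(z_1,z_2,z_1',z_2')|\ge 4\mu K^{-2}\qquad\text{for all } z_1,z_1'\in\tau_1,\ z,z_2,z_2'\in\tau_2.$$
   Context: $\Sigma:=[-1,1]^2$, $2\Sigma:=[-2,2]^2$. $\mathrm{Hyp}^M$ ($M\ge3$) is the set of $\phi\in C^M(\Sigma)$ extending to a $C^M$ function on $2\Sigma$ with $\phi(0)=0$, $\nabla\phi(0)=0$, $D^2\phi(0)=\begin{pmatrix}0&1\\1&0\end{pmatrix}$, and $\sup_{2\Sigma}|\partial_x^a\partial_y^b\phi|\le10^{-5}$ for $3\le a+b\le M$. A cap of side length $s$ with center $z^c$ is the closed axis-parallel square of side length $s$ centered at $z^c$, intersected with $\Sigma$. Set $H:=\phi_{xy}^2-\phi_{xx}\phi_{yy}$, $A:=\frac{\phi_{yy}}{\phi_{xy}+\sqrt H}$, $B:=\frac{\phi_{xx}}{\phi_{xy}+\sqrt H}$; $t^1_z(z_1,z_2):=\phi_x(z_2)-\phi_x(z_1)-B(z)(\phi_y(z_2)-\phi_y(z_1))$, $t^2_z(z_1,z_2):=\phi_y(z_2)-\phi_y(z_1)-A(z)(\phi_x(z_2)-\phi_x(z_1))$,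 and $\Gamma_z(z_1,z_2,z_1',z_2'):=\langle (D^2\phi(z))^{-1}(\nabla\phi(z_2)-\nabla\phi(z_1)),\nabla\phi(z_2')-\nabla\phi(z_1')\rangle$. *)

From Stdlib Require Import Reals Lra.
From Coquelicot Require Import Coquelicot.
Open Scope R_scope.

Definition pt := (R * R)%type.

Definition px (f : R -> R -> R) : R -> R -> R :=
  fun x y => Derive (fun t => f t y) x.
Definition py (f : R -> R -> R) : R -> R -> R :=
  fun x y => Derive (fun t => f x t) y.

Definition pd (a b : nat) (f : R -> R -> R) : R -> R -> R :=
  Nat.iter a px (Nat.iter b py f).

Definition in_open2Sigma (x y : R) : Prop := -2 < x < 2 /\ -2 < y < 2.

Fixpoint CkOn (k : nat) (f : R -> R -> R) : Prop :=
  match k with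
  | O => forall x y, in_open2Sigma x y ->
           continuous (fun p : R * R => f (fst p) (snd p)) (x, y)
  | S k' => (forall x y, in_open2Sigma x y ->
               continuous (fun p : R * R => f (fst p) (snd p)) (x, y)) /\
            (forall x y, in_open2Sigma x y ->
               ex_derive (fun t => f t y) x /\ ex_derive (fun t => f x t) y) /\
            CkOn k' (px f) /\ CkOn k' (py f)
  end.

Definition Hyp (M : nat) (phi : R -> R -> R) : Prop :=
  CkOn M phi /\
  phi 0 0 = 0 /\ pd 1 0 phi 0 0 = 0 /\ pd 0 1 phi 0 0 = 0 /\
  pd 2 0 phi 0 0 = 0 /\ pd 1 1 phi 0 0 = 1 /\ pd 0 2 phi 0 0 = 0 /\
  (forall a b : nat, (3 <= a + b)%nat -> (a + b <= M)%nat ->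
     forall x y, in_open2Sigma x y -> Rabs (pd a b phi x y) <= / 100000).

Definition inSigma (z : pt) : Prop :=
  -1 <= fst z <= 1 /\ -1 <= snd z <= 1.

Definition inCap (s : R) (zc z : pt) : Prop :=
  Rabs (fst z - fst zc) <= s / 2 /\ Rabs (snd z - snd zc) <= s / 2 /\ inSigma z.

Section Quant.
Variable phi : R -> R -> R.
Definition phx (z : pt) := pd 1 0 phi (fst z) (snd z).
Definition phy (z : pt) := pd 0 1 phi (fst z) (snd z).
Definition phxx (z : pt) := pd 2 0 phi (fst z) (snd z).
Definition phxy (z : pt) := pd 1 1 phi (fst z) (snd z).
Definition phyy (z : pt) := pd 0 2 phi (fst z) (snd z).

Definition Hq (z : pt) := phxy z ^ 2 - phxx z * phyy z.
Definition Aq (z : pt) := phyy z / (phxy z + sqrt (Hq z)).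
Definition Bq (z : pt) := phxx z / (phxy z + sqrt (Hq z)).

Definition t1 (z z1 z2 : pt) :=
  phx z2 - phx z1 - Bq z * (phy z2 - phy z1).
Definition t2 (z z1 z2 : pt) :=
  phy z2 - phy z1 - Aq z * (phx z2 - phx z1).

(* Gamma_z = < (D^2 phi(z))^{-1} (grad phi(z2) - grad phi(z1)),
               grad phi(z2') - grad phi(z1') >,
   with the inverse of the symmetric 2x2 Hessian [[p,q],[q,r]] written
   out as 1/(pr - q^2) [[r,-q],[-q,p]]. *)
Definition Gamma (z z1 z2 z1' z2' : pt) :=
  let p := phxx z in let q := phxy z in let r := phyy z in
  let d := p * r - q * q in
  let u1 := phx z2 - phx z1 in let u2 := phy z2 - phy z1 in
  let v1 := phx z2' - phx z1' in let v2 := phy z2' - phy z1' in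
  ((r * u1 - q * u2) / d) * v1 + ((- q * u1 + p * u2) / d) * v2.
End Quant.

(* Since phi ∈ Hyp^M has third derivatives at most eps = 10^-5 and
   D^2 phi(0) = [[0,1],[1,0]], on Sigma the Hessian is within 2 eps of this
   model and eps-Lipschitz, and grad phi is a near-isometric perturbation
   of (x,y) |-> (y,x) (mean value theorem along L-shaped paths).  On the
   algebraic side, the inverse-Hessian quadratic form factors along its two
   null directions as D t1 t2 / (q^2 - p r), D = q + sqrt (q^2 - p r), so the
   hypotheses t1, t2 >= 50 s (s = sqrt mu / K) give a main term >= 2000 s^2.
   Moving the points inside the caps changes the gradient differences by
   O(s) and the Hessian by O(eps s); by bilinearity these errors cost only
   a small fraction of t1 t2, which leaves |Gamma| >= 4 s^2. *)
From Stdlib Require Import Reals Lra Psatz.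
From Coquelicot Require Import Coquelicot.
Open Scope R_scope.

(** The size bound on the third derivatives in [Hyp]. *)
Definition eps : R := / 100000.

Lemma eps_pos : 0 < eps.
Proof. unfold eps; lra. Qed.

Lemma CkOn_S (k : nat) (f : R -> R -> R) : CkOn (S k) f -> CkOn k f.
Proof.
  revert f; induction k as [|k IH]; intros f H.
  - simpl in H |- *. tauto.
  - destruct H as (Hc & Hd & Hx & Hy). split; [exact Hc|]. split; [exact Hd|].
    split; apply IH; assumption.
Qed.

Lemma CkOn_le (k M : nat) (f : R -> R -> R) : (k <= M)%nat -> CkOn M f -> CkOn k f.
Proof. intros Hk; induction Hk; intros H; auto using CkOn_S. Qed.

Lemma open2Sigma_locally (x y : R) :
  in_open2Sigma x y -> locally_2d in_open2Sigma x y.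
Proof.
  intros [Hx Hy].
  assert (Hd : 0 < Rmin (2 - Rabs x) (2 - Rabs y)).
  { apply Rmin_pos; unfold Rabs; destruct (Rcase_abs _); lra. }
  exists (mkposreal _ Hd). simpl. intros u v Hu Hv.
  pose proof (Rmin_l (2 - Rabs x) (2 - Rabs y)).
  pose proof (Rmin_r (2 - Rabs x) (2 - Rabs y)).
  apply Rabs_def2 in Hu. apply Rabs_def2 in Hv.
  pose proof (Rle_abs x). pose proof (Rle_abs y).
  pose proof (Rle_abs (-x)). pose proof (Rle_abs (-y)). rewrite Rabs_Ropp in *.
  unfold in_open2Sigma. lra.
Qed.

Lemma px_py_comm (g : R -> R -> R) (x y : R) :
  CkOn 2 g -> in_open2Sigma x y -> py (px g) x y = px (py g) x y.
Proof.
  intros Hg Hxy. unfold px, py. symmetry.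
  destruct Hg as (_ & Hd & (_ & Hdx & _ & Hcyx) & (_ & Hdy & Hcxy & _)).
  apply Schwarz.
  - apply locally_2d_impl with (P := in_open2Sigma); [|now apply open2Sigma_locally].
    apply locally_2d_forall. intros u v Huv.
    destruct (Hd u v Huv), (Hdx u v Huv), (Hdy u v Huv). repeat split; assumption.
  - apply continuity_2d_pt_filterlim. now apply Hcxy.
  - apply continuity_2d_pt_filterlim. now apply Hcyx.
Qed.

(** The mixed derivative [d_y d_x d_x phi] in the normal form [pd 2 1 phi]
    bounded by [Hyp]. *)
Lemma pyxx_eq (phi : R -> R -> R) (x y : R) : CkOn 3 phi -> in_open2Sigma x y ->
  py (px (px phi)) x y = px (px (py phi)) x y.
Proof.
  intros H Hxy. rewrite px_py_comm; [| exact (proj1 (proj2 (proj2 H))) | exact Hxy].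
  unfold px at 1 3. apply Derive_ext_loc.
  apply (locally_2d_1d_const_y (fun u v => py (px phi) u v = px (py phi) u v)).
  apply locally_2d_impl with (P := in_open2Sigma); [|now apply open2Sigma_locally].
  apply locally_2d_forall. intros u v Huv. apply px_py_comm; [now apply CkOn_S | exact Huv].
Qed.

(** * Linearisation estimates from bounds on the derivatives *)

Lemma mvt_linear (f : R -> R) (a b c e : R) :
  (forall t, Rmin a b <= t <= Rmax a b -> ex_derive f t /\ Rabs (Derive f t - c) <= e) ->
  Rabs (f b - f a - c * (b - a)) <= e * Rabs (b - a).
Proof.
  intros H.
  destruct (MVT_gen f a b (Derive f)) as (t & Ht & ->).
  - intros x Hx. apply Derive_correct. apply H. lra.
  - intros x Hx. apply continuity_pt_filterlim.
    apply (ex_derive_continuous (K := R_AbsRing) (V := R_NormedModule) f). apply H. lra.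
  - replace (Derive f t * (b - a) - c * (b - a)) with ((Derive f t - c) * (b - a)) by ring.
    rewrite Rabs_mult. apply Rmult_le_compat_r; [apply Rabs_pos | apply H; lra].
Qed.

Definition inSq (x y : R) : Prop := -1 <= x <= 1 /\ -1 <= y <= 1.

Lemma inSq_open (x y : R) : inSq x y -> in_open2Sigma x y.
Proof. unfold inSq, in_open2Sigma; lra. Qed.

Lemma between_unit (a b t : R) :
  -1 <= a <= 1 -> -1 <= b <= 1 -> Rmin a b <= t <= Rmax a b -> -1 <= t <= 1.
Proof.
  intros. destruct (Rle_dec a b).
  - rewrite Rmin_left, Rmax_right in * by lra. lra.
  - rewrite Rmin_right, Rmax_left in * by lra. lra.
Qed.

(** Two-variable version along an L-shaped path inside the square: if the
    partials of [g] stay within [ex], [ey] of [cx], [cy], then [g] is within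
    [ex |dx| + ey |dy|] of its linearisation. *)
Lemma square_linear (g : R -> R -> R) (cx cy ex ey x1 y1 x2 y2 : R) :
  (forall x y, inSq x y ->
     ex_derive (fun t => g t y) x /\ ex_derive (fun t => g x t) y /\
     Rabs (px g x y - cx) <= ex /\ Rabs (py g x y - cy) <= ey) ->
  inSq x1 y1 -> inSq x2 y2 ->
  Rabs (g x2 y2 - g x1 y1 - cx * (x2 - x1) - cy * (y2 - y1))
    <= ex * Rabs (x2 - x1) + ey * Rabs (y2 - y1).
Proof.
  intros H [H1x H1y] [H2x H2y].
  assert (Hhor : Rabs (g x2 y1 - g x1 y1 - cx * (x2 - x1)) <= ex * Rabs (x2 - x1)).
  { apply (mvt_linear (fun t => g t y1)). intros t Ht.
    destruct (H t y1) as (Hd & _ & Hb & _); [split; eauto using between_unit|].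
    split; assumption. }
  assert (Hver : Rabs (g x2 y2 - g x2 y1 - cy * (y2 - y1)) <= ey * Rabs (y2 - y1)).
  { apply (mvt_linear (fun t => g x2 t)). intros t Ht.
    destruct (H x2 t) as (_ & Hd & _ & Hb); [split; eauto using between_unit|].
    split; assumption. }
  replace (g x2 y2 - g x1 y1 - cx * (x2 - x1) - cy * (y2 - y1)) with
    ((g x2 y1 - g x1 y1 - cx * (x2 - x1)) + (g x2 y2 - g x2 y1 - cy * (y2 - y1))) by ring.
  eapply Rle_trans; [apply Rabs_triang | lra].
Qed.

Lemma square_lipschitz (g : R -> R -> R) (e x1 y1 x2 y2 : R) :
  (forall x y, inSq x y ->
     ex_derive (fun t => g t y) x /\ ex_derive (fun t => g x t) y /\
     Rabs (px g x y) <= e /\ Rabs (py g x y) <= e) ->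
  inSq x1 y1 -> inSq x2 y2 ->
  Rabs (g x2 y2 - g x1 y1) <= e * Rabs (x2 - x1) + e * Rabs (y2 - y1).
Proof.
  intros H H1 H2.
  replace (g x2 y2 - g x1 y1) with (g x2 y2 - g x1 y1 - 0 * (x2 - x1) - 0 * (y2 - y1)) by ring.
  apply square_linear; auto. intros x y Hxy. rewrite !Rminus_0_r. now apply H.
Qed.

(** * Consequences of [phi ∈ Hyp^M] on the square *)

Section HypEstimates.
Variable M : nat.
Variable phi : R -> R -> R.
Hypothesis HM : (3 <= M)%nat.
Hypothesis Hphi : Hyp M phi.

Lemma hyp_C3 : CkOn 3 phi.
Proof. apply (CkOn_le 3 M); [exact HM | exact (proj1 Hphi)]. Qed.

Lemma hyp_third (a b : nat) (x y : R) :
  (a + b = 3)%nat -> inSq x y -> Rabs (pd a b phi x y) <= eps.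
Proof.
  intros Hab Hxy. destruct Hphi as (_&_&_&_&_&_&_&H). apply H; try lia.
  now apply inSq_open.
Qed.

Lemma hyp_derivable (x y : R) : inSq x y ->
  (ex_derive (fun t => px (px phi) t y) x /\ ex_derive (fun t => px (px phi) x t) y) /\
  (ex_derive (fun t => px (py phi) t y) x /\ ex_derive (fun t => px (py phi) x t) y) /\
  (ex_derive (fun t => py (py phi) t y) x /\ ex_derive (fun t => py (py phi) x t) y) /\
  (ex_derive (fun t => px phi t y) x /\ ex_derive (fun t => px phi x t) y) /\
  (ex_derive (fun t => py phi t y) x /\ ex_derive (fun t => py phi x t) y).
Proof.
  intros Hxy. apply inSq_open in Hxy.
  destruct hyp_C3 as (_ & _ & Hx & Hy).
  destruct Hx as (_ & Hx1 & (_ & Hxx & _) & (_ & Hxy1 & _)).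
  destruct Hy as (_ & Hy1 & (_ & Hyx & _) & (_ & Hyy & _)).
  destruct (Hxx x y Hxy), (Hyx x y Hxy), (Hyy x y Hxy), (Hx1 x y Hxy), (Hy1 x y Hxy).
  repeat split; assumption.
Qed.

Lemma phixx_lip (x1 y1 x2 y2 : R) : inSq x1 y1 -> inSq x2 y2 ->
  Rabs (px (px phi) x2 y2 - px (px phi) x1 y1) <= eps * Rabs (x2 - x1) + eps * Rabs (y2 - y1).
Proof.
  apply square_lipschitz. intros x y Hxy. destruct (hyp_derivable x y Hxy) as ([Ha Hb] & _).
  repeat split; auto.
  - exact (hyp_third 3 0 x y eq_refl Hxy).
  - rewrite pyxx_eq; [| exact hyp_C3 | now apply inSq_open].
    exact (hyp_third 2 1 x y eq_refl Hxy).
Qed.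

Lemma phixy_lip (x1 y1 x2 y2 : R) : inSq x1 y1 -> inSq x2 y2 ->
  Rabs (px (py phi) x2 y2 - px (py phi) x1 y1) <= eps * Rabs (x2 - x1) + eps * Rabs (y2 - y1).
Proof.
  apply square_lipschitz. intros x y Hxy. destruct (hyp_derivable x y Hxy) as (_ & [Ha Hb] & _).
  repeat split; auto.
  - exact (hyp_third 2 1 x y eq_refl Hxy).
  - rewrite px_py_comm; [| exact (proj2 (proj2 (proj2 hyp_C3))) | now apply inSq_open].
    exact (hyp_third 1 2 x y eq_refl Hxy).
Qed.

Lemma phiyy_lip (x1 y1 x2 y2 : R) : inSq x1 y1 -> inSq x2 y2 ->
  Rabs (py (py phi) x2 y2 - py (py phi) x1 y1) <= eps * Rabs (x2 - x1) + eps * Rabs (y2 - y1).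
Proof.
  apply square_lipschitz. intros x y Hxy. destruct (hyp_derivable x y Hxy) as (_ & _ & [Ha Hb] & _).
  repeat split; auto.
  - exact (hyp_third 1 2 x y eq_refl Hxy).
  - exact (hyp_third 0 3 x y eq_refl Hxy).
Qed.

(** Lipschitz bounds from the origin, where [D^2 phi = [[0,1],[1,0]]]. *)
Lemma dist_origin_bound (g : R -> R -> R) (c x y : R) :
  (forall x1 y1 x2 y2, inSq x1 y1 -> inSq x2 y2 ->
     Rabs (g x2 y2 - g x1 y1) <= eps * Rabs (x2 - x1) + eps * Rabs (y2 - y1)) ->
  g 0 0 = c -> inSq x y -> Rabs (g x y - c) <= 2 * eps.
Proof.
  intros Hlip <- Hxy. pose proof (Hlip 0 0 x y ltac:(unfold inSq; lra) Hxy) as L.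
  rewrite !Rminus_0_r in L. destruct Hxy.
  assert (Rabs x <= 1) by (apply Rabs_le; lra). assert (Rabs y <= 1) by (apply Rabs_le; lra).
  pose proof eps_pos. nra.
Qed.

Lemma phixx_small (x y : R) : inSq x y -> Rabs (px (px phi) x y) <= 2 * eps.
Proof.
  intros H. rewrite <- (Rminus_0_r (px (px phi) x y)).
  apply dist_origin_bound; [exact phixx_lip | apply Hphi | exact H].
Qed.

Lemma phixy_near1 (x y : R) : inSq x y -> Rabs (px (py phi) x y - 1) <= 2 * eps.
Proof. intros H. apply dist_origin_bound; [exact phixy_lip | apply Hphi | exact H]. Qed.

Lemma phiyy_small (x y : R) : inSq x y -> Rabs (py (py phi) x y) <= 2 * eps.
Proof.
  intros H. rewrite <- (Rminus_0_r (py (py phi) x y)).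
  apply dist_origin_bound; [exact phiyy_lip | apply Hphi | exact H].
Qed.

Lemma phix_linear (x1 y1 x2 y2 : R) : inSq x1 y1 -> inSq x2 y2 ->
  Rabs (px phi x2 y2 - px phi x1 y1 - (y2 - y1))
    <= 2 * eps * Rabs (x2 - x1) + 2 * eps * Rabs (y2 - y1).
Proof.
  intros H1 H2.
  replace (px phi x2 y2 - px phi x1 y1 - (y2 - y1)) with
    (px phi x2 y2 - px phi x1 y1 - 0 * (x2 - x1) - 1 * (y2 - y1)) by ring.
  apply square_linear; auto. intros x y Hxy.
  destruct (hyp_derivable x y Hxy) as (_ & _ & _ & [Ha Hb] & _).
  repeat split; auto.
  - rewrite Rminus_0_r. now apply phixx_small.
  - rewrite px_py_comm; [| now apply CkOn_S, hyp_C3 | now apply inSq_open].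
    now apply phixy_near1.
Qed.

Lemma phiy_linear (x1 y1 x2 y2 : R) : inSq x1 y1 -> inSq x2 y2 ->
  Rabs (py phi x2 y2 - py phi x1 y1 - (x2 - x1))
    <= 2 * eps * Rabs (x2 - x1) + 2 * eps * Rabs (y2 - y1).
Proof.
  intros H1 H2.
  replace (py phi x2 y2 - py phi x1 y1 - (x2 - x1)) with
    (py phi x2 y2 - py phi x1 y1 - 1 * (x2 - x1) - 0 * (y2 - y1)) by ring.
  apply square_linear; auto. intros x y Hxy.
  destruct (hyp_derivable x y Hxy) as (_ & _ & _ & _ & [Ha Hb]).
  repeat split; auto.
  - now apply phixy_near1.
  - rewrite Rminus_0_r. now apply phiyy_small.
Qed.

End HypEstimates.

Definition near_model (p q r : R) : Prop :=
  Rabs p <= 2 * eps /\ Rabs (q - 1) <= 2 * eps /\ Rabs r <= 2 * eps.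

Definition close3 (d p q r p' q' r' : R) : Prop :=
  Rabs (p' - p) <= d /\ Rabs (q' - q) <= d /\ Rabs (r' - r) <= d.

Lemma abs_shift (a d : R) : Rabs a <= Rabs (a - d) + Rabs d.
Proof. replace a with ((a - d) + d) at 1 by ring. apply Rabs_triang. Qed.

Section CapEstimates.
Variable M : nat.
Variable phi : R -> R -> R.
Hypothesis HM : (3 <= M)%nat.
Hypothesis Hphi : Hyp M phi.

Lemma hessian_near_model (z : pt) : inSigma z ->
  near_model (phxx phi z) (phxy phi z) (phyy phi z).
Proof.
  intros Hz. split; [|split].
  - exact (phixx_small M phi HM Hphi _ _ Hz).
  - exact (phixy_near1 M phi HM Hphi _ _ Hz).
  - exact (phiyy_small M phi HM Hphi _ _ Hz).
Qed.

Lemma hessian_close_cap (s : R) (zc z : pt) : inSigma zc -> inCap s zc z ->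
  close3 (eps * s) (phxx phi zc) (phxy phi zc) (phyy phi zc)
    (phxx phi z) (phxy phi z) (phyy phi z).
Proof.
  intros Hc (Hx & Hy & Hz). pose proof eps_pos.
  pose proof (phixx_lip M phi HM Hphi _ _ _ _ Hc Hz).
  pose proof (phixy_lip M phi HM Hphi _ _ _ _ Hc Hz).
  pose proof (phiyy_lip M phi HM Hphi _ _ _ _ Hc Hz).
  unfold close3, phxx, phxy, phyy, pd; simpl. repeat split; nra.
Qed.

Lemma gradient_cap (s : R) (zc z : pt) : inSigma zc -> inCap s zc z ->
  Rabs (phx phi z - phx phi zc) <= (1/2 + 2 * eps) * s /\
  Rabs (phy phi z - phy phi zc) <= (1/2 + 2 * eps) * s.
Proof.
  intros Hc (Hx & Hy & Hz). pose proof eps_pos.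
  pose proof (phix_linear M phi HM Hphi _ _ _ _ Hc Hz) as Gx.
  pose proof (phiy_linear M phi HM Hphi _ _ _ _ Hc Hz) as Gy.
  unfold phx, phy, pd; simpl. split.
  - eapply Rle_trans; [apply (abs_shift _ (snd z - snd zc)) |].
    nra.
  - eapply Rle_trans; [apply (abs_shift _ (fst z - fst zc)) |].
    nra.
Qed.

Lemma gradient_difference_caps (s : R) (c1 c2 z1 z2 : pt) :
  inSigma c1 -> inSigma c2 -> inCap s c1 z1 -> inCap s c2 z2 ->
  Rabs ((phx phi z2 - phx phi z1) - (phx phi c2 - phx phi c1)) <= 11/10 * s /\
  Rabs ((phy phi z2 - phy phi z1) - (phy phi c2 - phy phi c1)) <= 11/10 * s.
Proof.
  intros Hc1 Hc2 H1 H2. pose proof eps_pos.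
  assert (Hs : 0 <= s) by (destruct H1 as (Hx & _); pose proof (Rabs_pos (fst z1 - fst c1)); lra).
  destruct (gradient_cap s c1 z1 Hc1 H1) as [G1x G1y].
  destruct (gradient_cap s c2 z2 Hc2 H2) as [G2x G2y].
  split.
  - replace ((phx phi z2 - phx phi z1) - (phx phi c2 - phx phi c1)) with
      ((phx phi z2 - phx phi c2) + - (phx phi z1 - phx phi c1)) by ring.
    eapply Rle_trans; [apply Rabs_triang|]. rewrite Rabs_Ropp. unfold eps in *; nra.
  - replace ((phy phi z2 - phy phi z1) - (phy phi c2 - phy phi c1)) with
      ((phy phi z2 - phy phi c2) + - (phy phi z1 - phy phi c1)) by ring.
    eapply Rle_trans; [apply Rabs_triang|]. rewrite Rabs_Ropp. unfold eps in *; nra.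
Qed.

Lemma gradient_difference_bound (z1 z2 : pt) : inSigma z1 -> inSigma z2 ->
  Rabs (phx phi z2 - phx phi z1) <= 3 /\ Rabs (phy phi z2 - phy phi z1) <= 3.
Proof.
  intros H1 H2. pose proof eps_pos.
  pose proof (phix_linear M phi HM Hphi _ _ _ _ H1 H2) as Gx.
  pose proof (phiy_linear M phi HM Hphi _ _ _ _ H1 H2) as Gy.
  destruct H1 as [H1x H1y], H2 as [H2x H2y].
  assert (Dx : Rabs (fst z2 - fst z1) <= 2) by (apply Rabs_le; lra).
  assert (Dy : Rabs (snd z2 - snd z1) <= 2) by (apply Rabs_le; lra).
  unfold phx, phy, pd; simpl. split.
  - eapply Rle_trans; [apply (abs_shift _ (snd z2 - snd z1)) |]. unfold eps in *; nra.
  - eapply Rle_trans; [apply (abs_shift _ (fst z2 - fst z1)) |]. unfold eps in *; nra.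
Qed.

End CapEstimates.

(** * Linear algebra of the inverse of a near-model Hessian *)

(** The bilinear form [<(D^2)^{-1} x, y>] for the symmetric matrix [[p,q],[q,r]];
    [Gamma] is this form evaluated at gradient differences. *)
Definition gform (p q r x1 x2 y1 y2 : R) : R :=
  ((r * x1 - q * x2) / (p * r - q * q)) * y1 + ((- q * x1 + p * x2) / (p * r - q * q)) * y2.

Lemma Gamma_gform (phi : R -> R -> R) (z z1 z2 z1' z2' : pt) :
  Gamma phi z z1 z2 z1' z2' =
  gform (phxx phi z) (phxy phi z) (phyy phi z)
    (phx phi z2 - phx phi z1) (phy phi z2 - phy phi z1)
    (phx phi z2' - phx phi z1') (phy phi z2' - phy phi z1').
Proof. reflexivity. Qed.

Lemma gform_bilinear (p q r x1 x2 a1 a2 y1 y2 b1 b2 : R) :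
  gform p q r (x1 + a1) (x2 + a2) (y1 + b1) (y2 + b2) =
  gform p q r x1 x2 y1 y2 + gform p q r a1 a2 y1 y2 +
  gform p q r x1 x2 b1 b2 + gform p q r a1 a2 b1 b2.
Proof. unfold gform, Rdiv. ring. Qed.

Lemma near_model_det (p q r : R) : near_model p q r ->
  99/100 <= q * q - p * r <= 101/100.
Proof.
  unfold near_model, eps; intros (Hp & Hq & Hr).
  assert (Hpr : Rabs (p * r) <= 4 / 100000 / 100000).
  { rewrite Rabs_mult. pose proof (Rabs_pos p). pose proof (Rabs_pos r). nra. }
  apply Rabs_le_between in Hq, Hpr. nra.
Qed.

Lemma gform_bound (p q r x1 x2 y1 y2 : R) : near_model p q r ->
  Rabs (gform p q r x1 x2 y1 y2) <= 11/10 * ((Rabs x1 + Rabs x2) * (Rabs y1 + Rabs y2)).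
Proof.
  intros Hm. pose proof (near_model_det p q r Hm) as Hd.
  destruct Hm as (Hp & Hq & Hr).
  set (c := 1 + 2 * eps).
  assert (Hq' : Rabs (- q) <= c).
  { rewrite Rabs_Ropp. apply Rabs_le_between in Hq. apply Rabs_le. unfold c, eps in *; lra. }
  assert (Hp' : Rabs p <= c) by (unfold c, eps in *; lra).
  assert (Hr' : Rabs r <= c) by (unfold c, eps in *; lra).
  unfold gform.
  replace (((r * x1 - q * x2) / (p * r - q * q)) * y1 + ((- q * x1 + p * x2) / (p * r - q * q)) * y2)
    with ((r * x1 * y1 + (- q) * x2 * y1 + (- q) * x1 * y2 + p * x2 * y2) / - (q * q - p * r))
    by (field; lra).
  unfold Rdiv. rewrite Rabs_mult, Rabs_inv, Rabs_Ropp, (Rabs_right (q * q - p * r)) by lra.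
  assert (HN : Rabs (r * x1 * y1 + (- q) * x2 * y1 + (- q) * x1 * y2 + p * x2 * y2)
               <= c * ((Rabs x1 + Rabs x2) * (Rabs y1 + Rabs y2))).
  { eapply Rle_trans; [apply Rabs_triang|].
    eapply Rle_trans; [apply Rplus_le_compat_r, Rabs_triang|].
    eapply Rle_trans; [apply Rplus_le_compat_r, Rplus_le_compat_r, Rabs_triang|].
    rewrite !Rabs_mult.
    pose proof (Rabs_pos x1). pose proof (Rabs_pos x2).
    pose proof (Rabs_pos y1). pose proof (Rabs_pos y2).
    assert (Rabs r * Rabs x1 * Rabs y1 <= c * Rabs x1 * Rabs y1)
      by (apply Rmult_le_compat_r; [lra|]; apply Rmult_le_compat_r; lra).
    assert (Rabs (- q) * Rabs x2 * Rabs y1 <= c * Rabs x2 * Rabs y1)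
      by (apply Rmult_le_compat_r; [lra|]; apply Rmult_le_compat_r; lra).
    assert (Rabs (- q) * Rabs x1 * Rabs y2 <= c * Rabs x1 * Rabs y2)
      by (apply Rmult_le_compat_r; [lra|]; apply Rmult_le_compat_r; lra).
    assert (Rabs p * Rabs x2 * Rabs y2 <= c * Rabs x2 * Rabs y2)
      by (apply Rmult_le_compat_r; [lra|]; apply Rmult_le_compat_r; lra).
    nra. }
  set (N := Rabs (r * x1 * y1 + (- q) * x2 * y1 + (- q) * x1 * y2 + p * x2 * y2)) in *.
  set (Z := (Rabs x1 + Rabs x2) * (Rabs y1 + Rabs y2)) in *.
  assert (0 <= Z) by (unfold Z; pose proof (Rabs_pos x1); pose proof (Rabs_pos x2);
                      pose proof (Rabs_pos y1); pose proof (Rabs_pos y2); nra).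
  assert (0 <= N) by apply Rabs_pos.
  assert (/ (q * q - p * r) <= 100/99)
    by (replace (100/99) with (/ (99/100)) by field; apply Rinv_le_contravar; lra).
  assert (0 <= / (q * q - p * r)) by (apply Rlt_le, Rinv_0_lt_compat; lra).
  unfold c, eps in *. nra.
Qed.

Lemma gform_diag_perturb (p q r p' q' r' u1 u2 d : R) :
  near_model p q r -> near_model p' q' r' -> close3 d p q r p' q' r' ->
  Rabs (gform p' q' r' u1 u2 u1 u2 - gform p q r u1 u2 u1 u2)
    <= 5 * d * (Rabs u1 + Rabs u2) ^ 2.
Proof.
  intros Hm Hm' (Dp & Dq & Dr).
  pose proof (near_model_det p q r Hm) as Hd. pose proof (near_model_det p' q' r' Hm') as Hd'.
  destruct Hm as (Hp & Hq & Hr), Hm' as (Hp' & Hq' & Hr').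
  assert (Hd0 : 0 <= d) by (pose proof (Rabs_pos (p' - p)); lra).
  set (D := q * q - p * r) in *. set (D' := q' * q' - p' * r') in *.
  set (Q := r * (u1 * u1) + (-2 * q) * (u1 * u2) + p * (u2 * u2)).
  set (Q' := r' * (u1 * u1) + (-2 * q') * (u1 * u2) + p' * (u2 * u2)).
  unfold gform.
  replace ((((r' * u1 - q' * u2) / (p' * r' - q' * q')) * u1
             + ((- q' * u1 + p' * u2) / (p' * r' - q' * q')) * u2)
           - (((r * u1 - q * u2) / (p * r - q * q)) * u1
             + ((- q * u1 + p * u2) / (p * r - q * q)) * u2))
    with (- ((Q' - Q) / D' + Q * (D - D') / (D * D')))
    by (unfold Q, Q', D, D' in *; field; split; lra).
  rewrite Rabs_Ropp.
  set (L := Rabs u1 + Rabs u2).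
  pose proof (Rabs_pos u1). pose proof (Rabs_pos u2). pose proof eps_pos.
  assert (HL : 0 <= L) by (unfold L; lra).
  assert (EQ : Rabs (Q' - Q) <= d * L ^ 2).
  { replace (Q' - Q) with ((r' - r) * (u1 * u1) + (-2 * (q' - q)) * (u1 * u2) + (p' - p) * (u2 * u2))
      by (unfold Q, Q'; ring).
    eapply Rle_trans; [apply Rabs_triang|].
    eapply Rle_trans; [apply Rplus_le_compat_r, Rabs_triang|].
    rewrite !Rabs_mult. replace (Rabs (-2)) with 2 by (rewrite Rabs_left; lra).
    assert (Rabs (r' - r) * (Rabs u1 * Rabs u1) <= d * (Rabs u1 * Rabs u1))
      by (apply Rmult_le_compat_r; nra).
    assert (Rabs (q' - q) * (Rabs u1 * Rabs u2) <= d * (Rabs u1 * Rabs u2))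
      by (apply Rmult_le_compat_r; nra).
    assert (Rabs (p' - p) * (Rabs u2 * Rabs u2) <= d * (Rabs u2 * Rabs u2))
      by (apply Rmult_le_compat_r; nra).
    unfold L. nra. }
  assert (Hq1 : Rabs q <= 1 + 2 * eps) by (apply Rabs_le_between in Hq; apply Rabs_le; lra).
  assert (EQ0 : Rabs Q <= 101/100 * L ^ 2).
  { unfold Q. eapply Rle_trans; [apply Rabs_triang|].
    eapply Rle_trans; [apply Rplus_le_compat_r, Rabs_triang|].
    rewrite !Rabs_mult. replace (Rabs (-2)) with 2 by (rewrite Rabs_left; lra).
    assert (Rabs r * (Rabs u1 * Rabs u1) <= (1 + 2 * eps) * (Rabs u1 * Rabs u1))
      by (apply Rmult_le_compat_r; nra).
    assert (Rabs q * (Rabs u1 * Rabs u2) <= (1 + 2 * eps) * (Rabs u1 * Rabs u2))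
      by (apply Rmult_le_compat_r; nra).
    assert (Rabs p * (Rabs u2 * Rabs u2) <= (1 + 2 * eps) * (Rabs u2 * Rabs u2))
      by (apply Rmult_le_compat_r; nra).
    unfold L, eps in *. nra. }
  assert (ED : Rabs (D - D') <= 3 * d).
  { unfold D, D'.
    replace (q * q - p * r - (q' * q' - p' * r')) with (p * (r' - r) + r' * (p' - p) - (q' - q) * (q' + q))
      by ring.
    apply Rabs_le_between in Hq, Hq'.
    assert (Rabs (q' + q) <= 2 + 4 * eps) by (apply Rabs_le; lra).
    unfold Rminus at 1. eapply Rle_trans; [apply Rabs_triang|].
    eapply Rle_trans; [apply Rplus_le_compat_r, Rabs_triang|].
    rewrite Rabs_Ropp, !Rabs_mult.
    pose proof (Rabs_pos p). pose proof (Rabs_pos r'). pose proof (Rabs_pos (q' + q)).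
    pose proof (Rabs_pos (r' - r)). pose proof (Rabs_pos (p' - p)). pose proof (Rabs_pos (q' - q)).
    assert (Rabs p * Rabs (r' - r) <= 2 * eps * d) by (apply Rmult_le_compat; lra).
    assert (Rabs r' * Rabs (p' - p) <= 2 * eps * d) by (apply Rmult_le_compat; lra).
    assert (Rabs (q' - q) * Rabs (q' + q) <= d * (2 + 4 * eps)) by (apply Rmult_le_compat; lra).
    unfold eps in *. nra. }
  assert (ID : / D <= 100/99)
    by (replace (100/99) with (/ (99/100)) by field; apply Rinv_le_contravar; lra).
  assert (ID' : / D' <= 100/99)
    by (replace (100/99) with (/ (99/100)) by field; apply Rinv_le_contravar; lra).
  assert (0 <= / D) by (apply Rlt_le, Rinv_0_lt_compat; lra).
  assert (0 <= / D') by (apply Rlt_le, Rinv_0_lt_compat; lra).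
  eapply Rle_trans; [apply Rabs_triang|].
  unfold Rdiv. rewrite Rinv_mult, !Rabs_mult, !Rabs_inv, (Rabs_right D), (Rabs_right D') by lra.
  pose proof (Rabs_pos (Q' - Q)). pose proof (Rabs_pos Q). pose proof (Rabs_pos (D - D')).
  assert (A1 : Rabs (Q' - Q) * / D' <= d * L ^ 2 * (100/99)) by (apply Rmult_le_compat; lra).
  assert (A2 : Rabs Q * Rabs (D - D') <= 101/100 * L ^ 2 * (3 * d))
    by (apply Rmult_le_compat; lra).
  assert (A3 : / D * / D' <= 100/99 * (100/99)) by (apply Rmult_le_compat; lra).
  assert (0 <= L ^ 2) by nra.
  assert (A4 : Rabs Q * Rabs (D - D') * (/ D * / D')
               <= 101/100 * L ^ 2 * (3 * d) * (100/99 * (100/99)))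
    by (apply Rmult_le_compat; nra).
  nra.
Qed.

(** * Factorisation of the quadratic form along the null directions

    For a hyperbolic Hessian [[p,q],[q,r]] put [D = q + sqrt (q^2 - p r)].
    The quantities [t1 = u1 - (p/D) u2] and [t2 = u2 - (r/D) u1] are the
    coordinates of [u] along the two null directions of the inverse form,
    which therefore factors as [D t1 t2 / (q^2 - p r)]. *)
Definition tslope (p q r : R) : R := q + sqrt (q ^ 2 - p * r).

Lemma tslope_lower (p q r : R) : near_model p q r -> 9/10 <= tslope p q r.
Proof.
  intros Hm. pose proof (sqrt_pos (q ^ 2 - p * r)).
  destruct Hm as (_ & Hq & _). apply Rabs_le_between in Hq.
  unfold tslope, eps in *. lra.
Qed.

Lemma tslope_ratio_small (p q r a : R) : near_model p q r -> Rabs a <= 2 * eps ->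
  Rabs (a / tslope p q r) <= 3 * eps.
Proof.
  intros Hm Ha. pose proof (tslope_lower p q r Hm) as HD. pose proof eps_pos.
  unfold Rdiv. rewrite Rabs_mult, Rabs_inv, (Rabs_right (tslope p q r)) by lra.
  assert (/ tslope p q r <= 10/9)
    by (replace (10/9) with (/ (9/10)) by field; apply Rinv_le_contravar; lra).
  assert (0 <= / tslope p q r) by (apply Rlt_le, Rinv_0_lt_compat; lra).
  pose proof (Rabs_pos a). nra.
Qed.

(** The factorisation, which uses [D^2 = 2 q D - p r]. *)
Lemma gform_factor (p q r u1 u2 : R) : near_model p q r ->
  gform p q r u1 u2 u1 u2 =
  tslope p q r * ((u1 - p / tslope p q r * u2) * (u2 - r / tslope p q r * u1))
    / (q * q - p * r).
Proof.
  intros Hm. pose proof (near_model_det p q r Hm) as Hd.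
  pose proof (tslope_lower p q r Hm) as HD.
  set (S := sqrt (q ^ 2 - p * r)).
  assert (HS : S * S = q * q - p * r) by (unfold S; rewrite sqrt_sqrt; [ring | nra]).
  assert (Hslope : tslope p q r * tslope p q r = 2 * q * tslope p q r - p * r)
    by (unfold tslope; fold S; nra).
  unfold gform. field_simplify_eq; [| repeat split; lra].
  set (D := tslope p q r) in *.
  replace (D ^ 2) with (2 * q * D - p * r) by (rewrite <- Hslope; ring).
  ring.
Qed.

Lemma gform_diag_lower (p q r u1 u2 : R) : near_model p q r ->
  8/10 * (Rabs (u1 - p / tslope p q r * u2) * Rabs (u2 - r / tslope p q r * u1))
    <= Rabs (gform p q r u1 u2 u1 u2).
Proof.
  intros Hm. pose proof (near_model_det p q r Hm) as Hd.
  pose proof (tslope_lower p q r Hm) as HD.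
  rewrite (gform_factor p q r u1 u2 Hm).
  set (T1 := u1 - p / tslope p q r * u2). set (T2 := u2 - r / tslope p q r * u1).
  unfold Rdiv. rewrite !Rabs_mult, Rabs_inv.
  rewrite (Rabs_right (tslope p q r)), (Rabs_right (q * q - p * r)) by lra.
  assert (0 <= Rabs T1 * Rabs T2) by (pose proof (Rabs_pos T1); pose proof (Rabs_pos T2); nra).
  assert (/ (q * q - p * r) >= 100/101)
    by (replace (100/101) with (/ (101/100)) by field; apply Rle_ge, Rinv_le_contravar; lra).
  assert (tslope p q r * / (q * q - p * r) >= 8/10) by nra.
  replace (tslope p q r * (Rabs T1 * Rabs T2) * / (q * q - p * r))
    with ((tslope p q r * / (q * q - p * r)) * (Rabs T1 * Rabs T2)) by ring.
  nra.
Qed.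

Lemma l1_by_t (p q r u1 u2 : R) : near_model p q r ->
  Rabs u1 + Rabs u2
    <= 101/100 * (Rabs (u1 - p / tslope p q r * u2) + Rabs (u2 - r / tslope p q r * u1)).
Proof.
  intros Hm. pose proof eps_pos.
  pose proof (tslope_ratio_small p q r p Hm (proj1 Hm)) as Bp.
  pose proof (tslope_ratio_small p q r r Hm (proj2 (proj2 Hm))) as Br.
  assert (U1 : Rabs u1 <= Rabs (u1 - p / tslope p q r * u2) + 3 * eps * Rabs u2).
  { eapply Rle_trans; [apply (abs_shift u1 (p / tslope p q r * u2))|].
    rewrite Rabs_mult. pose proof (Rabs_pos u2). nra. }
  assert (U2 : Rabs u2 <= Rabs (u2 - r / tslope p q r * u1) + 3 * eps * Rabs u1).
  { eapply Rle_trans; [apply (abs_shift u2 (r / tslope p q r * u1))|].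
    rewrite Rabs_mult. pose proof (Rabs_pos u1). nra. }
  pose proof (Rabs_pos (u1 - p / tslope p q r * u2)).
  pose proof (Rabs_pos (u2 - r / tslope p q r * u1)).
  unfold eps in *. lra.
Qed.

Lemma Rabs_sum4_lower (A B C D : R) :
  Rabs (A + B + C + D) >= Rabs A - Rabs B - Rabs C - Rabs D.
Proof.
  assert (Rabs A <= Rabs (A + B + C + D) + Rabs B + Rabs C + Rabs D).
  { replace A with ((A + B + C + D) + (- B) + (- C) + (- D)) at 1 by ring.
    pose proof (Rabs_triang ((A + B + C + D) + (- B) + (- C)) (- D)).
    pose proof (Rabs_triang ((A + B + C + D) + (- B)) (- C)).
    pose proof (Rabs_triang (A + B + C + D) (- B)).
    rewrite !Rabs_Ropp in *. lra. }
  lra.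
Qed.

(** The form still has size at least [4 s^2]: the main term is
    [~ t1 t2 >= 2500 s^2], the cross terms are [O(s |u|) = O(t1 t2 / 25)]. *)
Lemma separated_form_lower (p q r p' q' r' u1 u2 x1 x2 y1 y2 s : R) : 0 < s ->
  near_model p q r -> near_model p' q' r' -> close3 (eps * s) p q r p' q' r' ->
  Rabs u1 <= 3 -> Rabs u2 <= 3 ->
  Rabs (x1 - u1) <= 11/10 * s -> Rabs (x2 - u2) <= 11/10 * s ->
  Rabs (y1 - u1) <= 11/10 * s -> Rabs (y2 - u2) <= 11/10 * s ->
  Rabs (u1 - p / tslope p q r * u2) >= 50 * s ->
  Rabs (u2 - r / tslope p q r * u1) >= 50 * s ->
  Rabs (gform p' q' r' x1 x2 y1 y2) >= 4 * s ^ 2.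
Proof.
  intros Hs Hm Hm' Hclose Hu1 Hu2 Ha1 Ha2 Hb1 Hb2 Ht1 Ht2. pose proof eps_pos.
  replace x1 with (u1 + (x1 - u1)) by ring. replace x2 with (u2 + (x2 - u2)) by ring.
  replace y1 with (u1 + (y1 - u1)) by ring. replace y2 with (u2 + (y2 - u2)) by ring.
  set (a1 := x1 - u1) in *. set (a2 := x2 - u2) in *.
  set (b1 := y1 - u1) in *. set (b2 := y2 - u2) in *.
  set (X := Rabs (u1 - p / tslope p q r * u2)) in *.
  set (Y := Rabs (u2 - r / tslope p q r * u1)) in *.
  set (L := Rabs u1 + Rabs u2).
  pose proof (Rabs_pos u1). pose proof (Rabs_pos u2).
  assert (HLXY : L <= 101/100 * (X + Y)) by exact (l1_by_t p q r u1 u2 Hm).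
  assert (Hmain : Rabs (gform p' q' r' u1 u2 u1 u2) >= 8/10 * (X * Y) - 5 * (eps * s) * L ^ 2).
  { pose proof (gform_diag_lower p q r u1 u2 Hm) as Hlow.
    pose proof (gform_diag_perturb p q r p' q' r' u1 u2 (eps * s) Hm Hm' Hclose) as Hpert.
    pose proof (Rabs_triang_inv (gform p q r u1 u2 u1 u2)
                  (gform p q r u1 u2 u1 u2 - gform p' q' r' u1 u2 u1 u2)) as Htri.
    replace (gform p q r u1 u2 u1 u2 - (gform p q r u1 u2 u1 u2 - gform p' q' r' u1 u2 u1 u2))
      with (gform p' q' r' u1 u2 u1 u2) in Htri by ring.
    rewrite Rabs_minus_sym in Htri. fold X Y L in Hlow, Hpert. lra. }
  assert (Ha : Rabs a1 + Rabs a2 <= 22/10 * s) by lra.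
  assert (Hb : Rabs b1 + Rabs b2 <= 22/10 * s) by lra.
  pose proof (Rabs_pos a1). pose proof (Rabs_pos a2).
  pose proof (Rabs_pos b1). pose proof (Rabs_pos b2).
  assert (Hau : Rabs (gform p' q' r' a1 a2 u1 u2) <= 11/10 * (22/10 * s * L)).
  { eapply Rle_trans; [apply gform_bound, Hm'|]. apply Rmult_le_compat_l; [lra|].
    apply Rmult_le_compat_r; [unfold L; lra | exact Ha]. }
  assert (Hub : Rabs (gform p' q' r' u1 u2 b1 b2) <= 11/10 * (L * (22/10 * s))).
  { eapply Rle_trans; [apply gform_bound, Hm'|]. apply Rmult_le_compat_l; [lra|].
    apply Rmult_le_compat_l; [unfold L; lra | exact Hb]. }
  assert (Hab : Rabs (gform p' q' r' a1 a2 b1 b2) <= 11/10 * (22/10 * s * (22/10 * s))).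
  { eapply Rle_trans; [apply gform_bound, Hm'|]. apply Rmult_le_compat_l; [lra|].
    apply Rmult_le_compat; lra. }
  rewrite gform_bilinear. eapply Rge_trans; [apply Rabs_sum4_lower|].
  (* the separation hypotheses make every error term a small multiple of [X Y] *)
  assert (HL6 : L <= 6) by (unfold L; lra).
  assert (F1 : s * X <= X * Y / 50) by (apply Rge_le in Ht2; unfold Y in *; nra).
  assert (F2 : s * Y <= X * Y / 50) by (apply Rge_le in Ht1; unfold X in *; nra).
  assert (F3 : s * s <= X * Y / 2500) by (apply Rge_le in Ht1, Ht2; unfold X, Y in *; nra).
  assert (F4 : s * L <= 101/100 * (X * Y / 25)) by nra.
  assert (F5 : s * L ^ 2 <= 6 * (s * L)).
  { assert (0 <= s * L) by (unfold L in *; nra). replace (s * L ^ 2) with ((s * L) * L) by ring. nra. }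
  unfold eps in *. nra.
Qed.

(** With [s = sqrt mu / K], apply [separated_form_lower] with the Hessian at
    the centre [z2c] as reference, [u] the gradient difference between the
    two centres, and the gradient differences between points of the caps as
    perturbations of [u]. *)
Theorem mainTheorem9 (M : nat) (phi : R -> R -> R) (K mu : R)
  (z1c z2c : pt) :
  (3 <= M)%nat -> Hyp M phi -> 1 <= K -> 1 <= mu ->
  inSigma z1c -> inSigma z2c ->
  Rabs (t1 phi z2c z1c z2c) >= 50 * sqrt mu / K ->
  Rabs (t2 phi z2c z1c z2c) >= 50 * sqrt mu / K ->
  forall z1 z1' z z2 z2' : pt,
    inCap (sqrt mu / K) z1c z1 -> inCap (sqrt mu / K) z1c z1' ->
    inCap (sqrt mu / K) z2c z -> inCap (sqrt mu / K) z2c z2 ->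
    inCap (sqrt mu / K) z2c z2' ->
    Rabs (Gamma phi z z1 z2 z1' z2') >= 4 * mu / K ^ 2.
Proof.
  intros HM Hphi HK Hmu Hc1 Hc2 Ht1 Ht2 z1 z1' z z2 z2' C1 C1' Cz C2 C2'.
  assert (Hs : 0 < sqrt mu / K) by (apply Rdiv_lt_0_compat; [apply sqrt_lt_R0|]; lra).
  replace (4 * mu / K ^ 2) with (4 * (sqrt mu / K) ^ 2)
    by (unfold Rdiv; rewrite Rpow_mult_distr, pow2_sqrt by lra; field; lra).
  replace (50 * sqrt mu / K) with (50 * (sqrt mu / K)) in Ht1, Ht2 by (field; lra).
  set (s := sqrt mu / K) in *.
  destruct (gradient_difference_caps M phi HM Hphi s z1c z2c z1 z2 Hc1 Hc2 C1 C2) as [Dx Dy].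
  destruct (gradient_difference_caps M phi HM Hphi s z1c z2c z1' z2' Hc1 Hc2 C1' C2') as [Dx' Dy'].
  destruct (gradient_difference_bound M phi HM Hphi z1c z2c Hc1 Hc2) as [Bx By].
  rewrite Gamma_gform.
  apply (separated_form_lower (phxx phi z2c) (phxy phi z2c) (phyy phi z2c) _ _ _
           (phx phi z2c - phx phi z1c) (phy phi z2c - phy phi z1c)); auto.
  - exact (hessian_near_model M phi HM Hphi z2c Hc2).
  - exact (hessian_near_model M phi HM Hphi z (proj2 (proj2 Cz))).
  - exact (hessian_close_cap M phi HM Hphi s z2c z Hc2 Cz).
Qed.
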